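(* Let $S$ be a $\Gamma$-AG$^{**}$-groupoid. Then $S$ is intra-regular if and only if every right $\Gamma$-ideal of $S$ is $\Gamma$-semiprime.
   Context: Let $S$ and $\Gamma$ be nonempty sets with a map $S\times\Gamma\times S\to S$, $(x,\gamma,y)\mapsto x\gamma y$. $S$ is a $\Gamma$-AG-groupoid if $(x\gamma y)\delta z=(z\gamma y)\delta x$ for all $x,y,z\in S$, $\gamma,\delta\in\Gamma$; it is a $\Gamma$-AG$^{**}$-groupoid if moreover $a\alpha(b\beta c)=b\alpha(a\beta c)$ for all $a,b,c\in S$, $\alpha,\beta\in\Gamma$. For subsets $A,B\subseteq S$, $A\Gamma B=\{a\gamma b: a\in A,\gamma\in\Gamma,b\in B\}$. $S$ is intra-regular if for every $a\in S$ there exist $x,y\in S$ and $\beta,\gamma,\delta\in\Gamma$ with $a=(x\beta(a\delta a))\gamma y$. A nonempty subset $R$ is a right $\Gamma$-ideal if $R\Gamma S\subseteq R$. A subset $P\subseteq S$ is $\Gamma$-semiprime if for every $a\in S$, $a\Gamma a\subseteq P$ implies $a\in P$. *)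

Definition is_GammaAG {S G : Type} (op : S -> G -> S -> S) : Prop :=
  forall (x y z : S) (g d : G), op (op x g y) d z = op (op z g y) d x.

Definition is_GammaAGss {S G : Type} (op : S -> G -> S -> S) : Prop :=
  is_GammaAG op /\
  forall (a b c : S) (al be : G), op a al (op b be c) = op b al (op a be c).

Definition intra_regular {S G : Type} (op : S -> G -> S -> S) : Prop :=
  forall a : S, exists (x y : S) (be ga de : G),
    a = op (op x be (op a de a)) ga y.

Definition right_Gamma_ideal {S G : Type} (op : S -> G -> S -> S) (R : S -> Prop) : Prop :=
  (exists r, R r) /\ forall (r : S) (g : G) (s : S), R r -> R (op r g s).

Definition Gamma_semiprime {S G : Type} (op : S -> G -> S -> S) (P : S -> Prop) : Prop :=
  forall a : S, (forall g : G, P (op a g a)) -> P a.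


(* Both directions rest on the paramedial law (a b)(c d) = (d b)(c a) of
   AG**-groupoids.  If a = (x (a a)) y, moving the factors around with the
   left invertive law, the left commutative law and the paramedial law exhibits
   a as ((a a) u) v, so a lies in every right ideal containing a Γ a.
   Conversely, the right ideal generated by a Γ a is
   a Γ a ∪ (a Γ a) Γ S ∪ S Γ (a Γ a) ∪ (S Γ (a Γ a)) Γ S; semiprimeness puts a
   into it, and in each of the four cases a is intra-regular. *)

Section GammaAGss.

Context {S G : Type} (op : S -> G -> S -> S).
Hypothesis opAGss : is_GammaAGss op.

Lemma op_left_invertive x y z g d : op (op x g y) d z = op (op z g y) d x.
Proof. exact (proj1 opAGss x y z g d). Qed.

Lemma op_left_comm a b c al be : op a al (op b be c) = op b al (op a be c).
Proof. exact (proj2 opAGss a b c al be). Qed.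

Lemma op_paramedial a b c d al be ga :
  op (op a al b) be (op c ga d) = op (op d al b) be (op c ga a).
Proof.
  rewrite (op_left_comm (op a al b)), op_left_invertive, op_left_comm.
  reflexivity.
Qed.

Definition intra_regular_at (a : S) : Prop :=
  exists (x y : S) (be ga de : G), a = op (op x be (op a de a)) ga y.

Lemma intra_regular_at_square_right a :
  intra_regular_at a ->
  exists (g be ga : G) (u v : S), a = op (op (op a g a) be u) ga v.
Proof.
  intros (x & y & be & ga & de & Ha).
  rewrite op_left_comm in Ha.
  assert (Hp : a = op (op y be (op x de a)) ga a)
    by (rewrite <- op_left_invertive; exact Ha).
  assert (Hsq : op a be (op x de a)
                = op (op a ga a) be (op x de (op y be (op x de a)))).
  { rewrite <- op_paramedial; f_equal; exact Hp. }
  exists ga, be, ga, (op x de (op y be (op x de a))), y.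
  rewrite <- Hsq; exact Ha.
Qed.

Lemma intra_regular_at_mem_right_ideal (R : S -> Prop) a :
  (forall r g s, R r -> R (op r g s)) ->
  (forall g, R (op a g a)) -> intra_regular_at a -> R a.
Proof.
  intros HR Hsq Ha.
  destruct (intra_regular_at_square_right a Ha) as (g & be & ga & u & v & ->).
  apply HR, HR, Hsq.
Qed.

Inductive square_ideal (a : S) : S -> Prop :=
  | square_ideal_sq g : square_ideal a (op a g a)
  | square_ideal_sq_r g al s : square_ideal a (op (op a g a) al s)
  | square_ideal_l_sq w be g : square_ideal a (op w be (op a g a))
  | square_ideal_l_sq_r x be de ga y :
      square_ideal a (op (op x be (op a de a)) ga y).

Lemma square_ideal_right_closed a r g s :
  square_ideal a r -> square_ideal a (op r g s).
Proof.
  intros [g' | g' al t | w be g' | x be de ga y].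
  - apply square_ideal_sq_r.
  - rewrite op_left_invertive; apply square_ideal_l_sq.
  - apply square_ideal_l_sq_r.
  - rewrite op_left_invertive, op_paramedial, op_left_invertive.
    apply square_ideal_l_sq.
Qed.

Lemma square_ideal_right_Gamma_ideal (g0 : G) a :
  right_Gamma_ideal op (square_ideal a).
Proof.
  split.
  - exists (op a g0 a); apply square_ideal_sq.
  - intros r g s; apply square_ideal_right_closed.
Qed.

Lemma square_ideal_self_intra_regular_at a :
  square_ideal a a -> intra_regular_at a.
Proof.
  assert (Hgen : forall z, square_ideal a z -> z = a -> intra_regular_at a).
  { intros z [g | g al s | w be g | x be de ga y] Hg.
    - exists a, a, g, g, g.
      rewrite !Hg; reflexivity.
    - exists (op a al s), s, g, al, g.
      assert (Hsq : op a g a = op (op a al s) g (op a g a)).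
      { rewrite op_left_invertive, Hg; reflexivity. }
      rewrite <- Hsq; symmetry; exact Hg.
    - exists w, (op w g a), be, be, g.
      rewrite Hg, op_left_comm; symmetry; exact Hg.
    - exists x, y, be, ga, de; symmetry; exact Hg. }
  intros Ha; exact (Hgen a Ha eq_refl).
Qed.

End GammaAGss.

Theorem mainTheorem15 (S G : Type) (s0 : S) (g0 : G) (op : S -> G -> S -> S) :
  is_GammaAGss op ->
  (intra_regular op <->
   forall R : S -> Prop, right_Gamma_ideal op R -> Gamma_semiprime op R).
Proof.
  (* [g0] makes the ideal generated by a Γ a nonempty. *)
  intros Hop; split.
  - intros Hreg R [_ HR] a Hsq.
    exact (intra_regular_at_mem_right_ideal op Hop R a HR Hsq (Hreg a)).
  - intros Hsemi a.
    apply (square_ideal_self_intra_regular_at op Hop).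
    apply (Hsemi _ (square_ideal_right_Gamma_ideal op Hop g0 a)).
    intros g; apply square_ideal_sq.
Qed.
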